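(* Let $r\ge2$ and $k\ge3$ be integers and let $\widehat{F}_k$ be any $r$-coloring of $K_k$. Let $G$ be an $(r,\widehat{F}_k)$-extremal graph which is not a complete multipartite graph. For any vertices $u,v,w$ of $G$ such that $uv\notin E(G)$, $uw\notin E(G)$ and $vw\in E(G)$, the graph obtained from $G$ by deleting the edge $vw$ is still $(r,\widehat{F}_k)$-extremal.
   Context: An $r$-coloring of a graph assigns colors from $\{1,\dots,r\}$ to edges (not necessarily properly). A copy of $\widehat{F}_k$ in a colored graph is a set of $k$ pairwise adjacent vertices admitting a bijection to $V(K_k)$ under which two edges have equal colors iff their images have equal colors in $\widehat{F}_k$; a coloring is $\widehat{F}_k$-free if it has no copy. $c_{r,\widehat{F}_k}(G)$ is the number of $\widehat{F}_k$-free $r$-colorings of $E(G)$, $c_{r,\widehat{F}_k}(n)$ its maximum over $n$-vertex graphs, and an $n$-vertex graph $G$ is $(r,\widehat{F}_k)$-extremal if $c_{r,\widehat{F}_k}(G)=c_{r,\widehat{F}_k}(n)$. *)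

From mathcomp Require Import all_boot.
Set Implicit Arguments. Unset Strict Implicit. Unset Printing Implicit Defensive.

Definition simple_graph n (E : {set {set 'I_n}}) : bool :=
  [forall e in E, #|e| == 2].

Definition edge_t n (E : {set {set 'I_n}}) := {e : {set 'I_n} | e \in E}.

Definition coloring n (E : {set {set 'I_n}}) r := {ffun edge_t E -> 'I_r}.

Definition colof n (E : {set {set 'I_n}}) r (c : coloring E r) (e : {set 'I_n})
  : option 'I_r :=
  match @insub _ (fun x => x \in E) (edge_t E) e with
  | Some s => Some (c s)
  | None => None
  end.

(* The pattern \hat F_k: an r-coloring of K_k, i.e. a color F [set i; j] for
   each pair i <> j in 'I_k (values on other subsets are irrelevant). *)
Definition pattern k r := {ffun {set 'I_k} -> 'I_r}.

Definition is_copy n k r (E : {set {set 'I_n}}) (c : coloring E r)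
  (F : pattern k r) (phi : {ffun 'I_k -> 'I_n}) : bool :=
  [&& injectiveb phi,
      [forall i : 'I_k, forall j : 'I_k, (i != j) ==> ([set phi i; phi j] \in E)] &
      [forall i : 'I_k, forall j : 'I_k, forall i' : 'I_k, forall j' : 'I_k,
         ((i != j) && (i' != j')) ==>
         ((colof c [set phi i; phi j] == colof c [set phi i'; phi j'])
          == (F [set i; j] == F [set i'; j']))]].

Definition F_free n k r (E : {set {set 'I_n}}) (c : coloring E r)
  (F : pattern k r) : bool :=
  ~~ [exists phi : {ffun 'I_k -> 'I_n}, is_copy c F phi].

Definition cnt_free n k r (F : pattern k r) (E : {set {set 'I_n}}) : nat :=
  #|[set c : coloring E r | F_free c F]|.

Definition extremal n k r (F : pattern k r) (E : {set {set 'I_n}}) : Prop :=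
  simple_graph E /\
  forall E' : {set {set 'I_n}}, simple_graph E' -> cnt_free F E' <= cnt_free F E.

Definition complete_multipartite n (E : {set {set 'I_n}}) : Prop :=
  exists p : 'I_n -> nat,
    forall x y : 'I_n, x != y -> ([set x; y] \in E) = (p x != p y).

From mathcomp Require Import all_boot fingroup perm.
Set Implicit Arguments. Unset Strict Implicit. Unset Printing Implicit Defensive.

(* Zykov symmetrization.  Let H be the complement of {u, v, w} and, for a
   coloring psi of G[H], let a, b_v, b_w, b_vw count the F-free colorings of
   G[H + u], G[H + v], G[H + w], G[H + v + w] extending psi.  Every clique of
   a graph lies on one side of a separator, so these counts multiply:
   c(G) = sum a b_vw, c(G - vw) = sum a b_v b_w, and c(G') = sum a^3 for the
   graph G' in which v and w are replaced by non-adjacent twins of u.  If x, y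
   are non-adjacent in an extremal graph, turning either into a twin of the
   other cannot increase sum a_x a_y, which forces a_x = a_y for every psi;
   applied to (u, v) and (u, w) this gives b_vw = a b_v = a b_w.  By AM-GM,
   2 c(G) <= c(G - vw) + c(G') <= c(G - vw) + c(G). *)

Lemma card_fibers (A B : finType) (S : {set A}) (f : A -> B) :
  #|S| = \sum_b #|[set x in S | f x == b]|.
Proof.
rewrite -sum1_card (partition_big f xpredT) //=.
by apply: eq_bigr => b _; rewrite -sum1_card; apply: eq_bigl => x; rewrite inE.
Qed.

Lemma pairs_one_side (I T : finType) (phi : I -> T) (X1 X2 : {set T}) :
  (forall i j, i != j -> ([set phi i; phi j] \subset X1) || ([set phi i; phi j] \subset X2)) ->
  (forall i j, i != j -> [set phi i; phi j] \subset X1) \/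
  (forall i j, i != j -> [set phi i; phi j] \subset X2).
Proof.
have pairE (X : {set T}) i j : ([set phi i; phi j] \subset X) = (phi i \in X) && (phi j \in X).
  by rewrite subUset !sub1set.
move=> side; case: (boolP [exists i, exists j, (i != j) && (phi i \notin X1)]).
  case/existsP=> a /existsP [b /andP [ab aX1]].
  have inX2 c : phi c \in X2.
    have [-> | ac] := eqVneq c a.
      by move: (side a b ab); rewrite !pairE (negbTE aX1) => /andP [].
    by move: (side a c); rewrite eq_sym ac !pairE (negbTE aX1) /= => /(_ isT) /andP [].
  by right=> i j _; rewrite pairE !inX2.
rewrite negb_exists => /forallP no1.
have inX1 a b : a != b -> phi a \in X1.
  by move=> ab; apply: contraR (no1 a) => aX1; apply/existsP; exists b; rewrite ab.
by left=> i j ij; rewrite pairE (inX1 i j) // (inX1 j i) // eq_sym.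
Qed.

Lemma eq_of_sum_sqr_le (I : finType) (a b : I -> nat) :
  \sum_i a i ^ 2 <= \sum_i a i * b i -> \sum_i b i ^ 2 <= \sum_i a i * b i -> a =1 b.
Proof.
move=> leA leB.
have cauchy := leqif_sum (P := xpredT) (fun i _ => nat_Cauchy (a i) (b i)).
suff /forall_inP eq_ab : [forall (i | xpredT i), a i == b i] by move=> i; apply/eqP/eq_ab.
rewrite -cauchy.2 eqn_leq cauchy.1 big_split -big_distrr /= mul2n -addnn.
exact: leq_add.
Qed.

Lemma twin_AM_GM (a v w x : nat) : x = a * v -> x = a * w ->
  2 * (a * x) <= a * (v * w) + a * (a * a).
Proof.
have [-> | a_gt0] := posnP a; first by rewrite !mul0n.
move=> xv xw; have vw : v = w by apply/eqP; rewrite -(eqn_pmul2l a_gt0) -xv -xw.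
rewrite xv -vw mulnCA -mulnDr leq_mul2l addnC !mulnn.
by rewrite (nat_Cauchy a v).1 orbT.
Qed.

Section FinsetFacts.
Variable T : finType.
Implicit Types (s : {perm T}) (x y z : T) (e X : {set T}).

Lemma imset_permK s X : s^-1%g @: (s @: X) = X.
Proof. by rewrite -imset_comp (eq_imset _ (permK s)) imset_id. Qed.

Lemma imset_permKV s X : s @: (s^-1%g @: X) = X.
Proof. by rewrite -imset_comp (eq_imset _ (permKV s)) imset_id. Qed.

Lemma subset_imset_perm s e X : (s^-1%g @: e \subset X) = (e \subset s @: X).
Proof.
apply/idP/idP => sub; first by rewrite -(imset_permKV s e); apply: imsetS.
by rewrite -(imset_permK s X); apply: imsetS.
Qed.

Lemma imset_tperm_id x y e : x \notin e -> y \notin e -> tperm x y @: e = e.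
Proof.
move=> xe ye; rewrite -[RHS]imset_id; apply: eq_in_imset => z ze.
by rewrite tpermD //; [apply: contraNneq xe => -> | apply: contraNneq ye => ->].
Qed.

Lemma setC2_split x y z : z != x -> z != y -> ~: [set x; y] = z |: ~: [set x; y; z].
Proof.
move=> zx zy; apply/setP => a; rewrite !inE.
by have [-> | az] := eqVneq a z; rewrite ?(negbTE zx) ?(negbTE zy) ?orbF.
Qed.

Lemma setD1_powerset (E : {set {set T}}) e X :
  ~~ (e \subset X) -> (E :\ e) :&: powerset X = E :&: powerset X.
Proof.
move=> eX; apply/setP => e'; rewrite !inE ?powersetE.
by have [-> | //] := eqVneq e' e; rewrite (negbTE eX) !andbF.
Qed.

End FinsetFacts.

Section Graphs.
Variable n : nat.
Implicit Types (x y : 'I_n) (e Z : {set 'I_n}) (E G : {set {set 'I_n}}).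

Lemma simple_graph_subset E G : simple_graph E -> G \subset E -> simple_graph G.
Proof.
move=> /forallP simpleE /subsetP GE; apply/forallP => e; apply/implyP => eG.
exact: implyP (simpleE e) (GE e eG).
Qed.

(* [y] becomes a non-adjacent twin of [x]: its own edges are dropped and it
   receives a copy of every edge at [x] other than [xy]. *)
Definition clone E x y : {set {set 'I_n}} :=
  [set e : {set 'I_n} | if y \in e then (x \notin e) && (tperm x y @: e \in E) else e \in E].

Lemma mem_clone_notin E x y e : y \notin e -> (e \in clone E x y) = (e \in E).
Proof. by rewrite inE => /negbTE ->. Qed.

Lemma clone_powerset E x y Z : y \notin Z -> clone E x y :&: powerset Z = E :&: powerset Z.
Proof.
move=> yZ; apply/setP => e; rewrite !in_setI powersetE.
case: (boolP (e \subset Z)) => [eZ | _]; rewrite ?andbF // !andbT mem_clone_notin //.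
by apply: contra yZ; apply: (subsetP eZ).
Qed.

Lemma clone_simple E x y : simple_graph E -> simple_graph (clone E x y).
Proof.
move=> /forallP simpleE; apply/forallP => e; apply/implyP; rewrite inE.
case: ifP => _; last by move/(implyP (simpleE e)).
by case/andP=> _ /(implyP (simpleE _)); rewrite card_imset //; apply: perm_inj.
Qed.

Lemma clone_nonedge E x y : [set x; y] \notin clone E x y.
Proof. by rewrite inE !inE !eqxx orbT. Qed.

Lemma mem_clone_pair E x y a : x != y -> a != x -> a != y ->
  ([set a; y] \in clone E x y) = ([set a; x] \in E).
Proof.
move=> xy ax ay; rewrite inE !inE eqxx orbT eq_sym (negbTE ax) (negbTE xy) /=.
by rewrite imsetU1 imset_set1 tpermR tpermD // eq_sym.
Qed.

End Graphs.

Section PartialColorings.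
Variables (n k r : nat) (F : pattern k r).

(* A coloring of a graph is encoded as a map on all vertex sets that is
   [None] exactly off the edges; unlike [coloring E r], its type does not
   depend on the graph, so colorings of different (sub)graphs can be compared
   and glued. *)
Local Notation pcol := {ffun {set 'I_n} -> option 'I_r}.
Implicit Types (A B H X Y Z e : {set 'I_n}) (x y : 'I_n) (E G : {set {set 'I_n}})
  (g psi chi : pcol) (phi : {ffun 'I_k -> 'I_n}) (s : {perm 'I_n}).

Definition pcol_copy g phi : bool :=
  [&& injectiveb phi,
      [forall i, forall j, (i != j) ==> (g [set phi i; phi j] != None)] &
      [forall i, forall j, forall i', forall j',
         ((i != j) && (i' != j')) ==>
         ((g [set phi i; phi j] == g [set phi i'; phi j'])
          == (F [set i; j] == F [set i'; j']))]].

Definition pcol_free g := ~~ [exists phi, pcol_copy g phi].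

Definition pcol_on E g := [forall e, (g e != None) == (e \in E)].

Definition pcol_restr X g : pcol := [ffun e : {set 'I_n} => if e \subset X then g e else None].

Definition nb_ext E X Y psi := #|[set g | [&& pcol_on (E :&: powerset X) g,
                                           pcol_free g & pcol_restr Y g == psi]]|.

Lemma pcol_onP E g : reflect (forall e, (g e != None) = (e \in E)) (pcol_on E g).
Proof.
apply: (iffP forallP) => on_E e; last by rewrite on_E.
exact: eqP (on_E e).
Qed.

Definition pcol_of E (c : coloring E r) : pcol := [ffun e : {set 'I_n} => colof c e].

Lemma colof_eqNone E (c : coloring E r) e : (colof c e != None) = (e \in E).
Proof. by rewrite /colof; case: insubP => [s -> _ | /negbTE ->]. Qed.

Lemma colof_val E (c : coloring E r) (s : edge_t E) : colof c (val s) = Some (c s).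
Proof. by rewrite /colof valK. Qed.

Lemma pcol_of_inj E : injective (@pcol_of E).
Proof.
move=> c1 c2 /ffunP c12; apply/ffunP => s.
by have := c12 (val s); rewrite !ffunE !colof_val => -[].
Qed.

Lemma pcol_of_on E (c : coloring E r) : pcol_on E (pcol_of c).
Proof. by apply/pcol_onP => e; rewrite ffunE colof_eqNone. Qed.

Lemma pcol_of_copy E (c : coloring E r) phi : is_copy c F phi = pcol_copy (pcol_of c) phi.
Proof.
rewrite /is_copy /pcol_copy; congr [&& _, _ & _].
  by apply: eq_forallb => i; apply: eq_forallb => j; rewrite ffunE colof_eqNone.
by do 4![apply: eq_forallb => ?]; rewrite !ffunE.
Qed.

Lemma pcol_of_free E (c : coloring E r) : F_free c F = pcol_free (pcol_of c).
Proof. by congr (~~ _); apply: eq_existsb => phi; rewrite pcol_of_copy. Qed.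

Lemma pcol_of_surj E g : 0 < r -> pcol_on E g -> exists c : coloring E r, g = pcol_of c.
Proof.
move=> r_gt0 /pcol_onP on_E; exists [ffun s => odflt (Ordinal r_gt0) (g (val s))].
apply/ffunP => e; rewrite !ffunE /colof; case: insubP => [s _ <- | e_notE].
  by rewrite ffunE; have := on_E (val s); rewrite (valP s); case: (g (val s)).
by have := on_E e; rewrite (negbTE e_notE); case: (g e).
Qed.

Lemma cnt_free_pcol E : 0 < r ->
  cnt_free F E = #|[set g | pcol_on E g && pcol_free g]|.
Proof.
move=> r_gt0; rewrite /cnt_free -(card_imset _ (@pcol_of_inj E)).
apply: eq_card => g; rewrite !inE.
apply/imsetP/andP => [[c] | [/(pcol_of_surj r_gt0) [c ->]]].
  by rewrite inE pcol_of_free => c_free ->; rewrite pcol_of_on.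
by rewrite -pcol_of_free => c_free; exists c; rewrite ?inE.
Qed.

Lemma pcol_restrK X Z g : X \subset Z -> pcol_restr X (pcol_restr Z g) = pcol_restr X g.
Proof.
move=> XZ; apply/ffunP => e; rewrite !ffunE.
by case: ifP => // eX; rewrite (subset_trans eX XZ).
Qed.

Lemma cnt_free_nb_ext E Y : 0 < r -> cnt_free F E = \sum_psi nb_ext E setT Y psi.
Proof.
move=> r_gt0; rewrite cnt_free_pcol // (card_fibers _ (pcol_restr Y)).
by apply: eq_bigr => psi _; apply: eq_card => g; rewrite !inE powersetT setIT andbA.
Qed.

Lemma nb_ext_restr E X Y Z psi : Y \subset Z ->
  nb_ext E X Y psi = \sum_chi (pcol_restr Y chi == psi) * nb_ext E X Z chi.
Proof.
move=> YZ; rewrite /nb_ext (card_fibers _ (pcol_restr Z)); apply: eq_bigr => chi _.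
have [<- | ne] := eqVneq (pcol_restr Y chi) psi; rewrite /= ?mul1n ?mul0n.
  apply: eq_card => g; rewrite !inE -andbA.
  have [<- | _] := eqVneq (pcol_restr Z g) chi; last by rewrite !andbF.
  by rewrite pcol_restrK // eqxx andbT.
apply: eq_card0 => g; rewrite !inE; have [Zg | ] := eqVneq (pcol_restr Z g) chi; last first.
  by rewrite andbF.
by rewrite -Zg pcol_restrK // in ne; rewrite (negbTE ne) !andbF.
Qed.

Lemma nb_ext_out E X Y psi : pcol_restr Y psi != psi -> nb_ext E X Y psi = 0.
Proof.
move=> psi_out; rewrite /nb_ext; apply: eq_card0 => g; rewrite !inE.
by apply: contra_neqF psi_out => /and3P [_ _ /eqP <-]; rewrite pcol_restrK.
Qed.

Lemma eq_nb_ext E G X Y psi : E :&: powerset X = G :&: powerset X ->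
  nb_ext E X Y psi = nb_ext G X Y psi.
Proof. by rewrite /nb_ext => ->. Qed.

Lemma pcol_on_notin E g e : pcol_on E g -> e \notin E -> g e = None.
Proof. by move=> /pcol_onP/(_ e) on_g /negbTE; rewrite -on_g; case: (g e). Qed.

Lemma pcol_on_restr E X Z g : X \subset Z ->
  pcol_on (E :&: powerset Z) g -> pcol_on (E :&: powerset X) (pcol_restr X g).
Proof.
move=> XZ /pcol_onP on_g; apply/pcol_onP => e; rewrite ffunE !inE ?powersetE.
by case: ifP => eX; rewrite ?andbF // on_g !inE ?powersetE (subset_trans eX XZ).
Qed.

Lemma eq_pcol_copy g1 g2 phi :
  (forall i j, i != j -> g1 [set phi i; phi j] = g2 [set phi i; phi j]) ->
  pcol_copy g1 phi = pcol_copy g2 phi.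
Proof.
move=> g12; rewrite /pcol_copy; congr [&& _, _ & _].
  by apply: eq_forallb => i; apply: eq_forallb => j; case: eqVneq => //= ij; rewrite g12.
do 4![apply: eq_forallb => ?].
by case: eqVneq => //= ij; case: eqVneq => //= ij'; rewrite !g12.
Qed.

Lemma pcol_copy_clique g phi i j :
  pcol_copy g phi -> i != j -> g [set phi i; phi j] != None.
Proof. by case/and3P=> _ /forallP/(_ i)/forallP/(_ j) /implyP. Qed.

Lemma pcol_free_restr X g : pcol_free g -> pcol_free (pcol_restr X g).
Proof.
apply: contra => /existsP [phi copy_phi]; apply/existsP; exists phi.
rewrite -(eq_pcol_copy (g1 := pcol_restr X g)) // => i j ij.
by move: (pcol_copy_clique copy_phi ij); rewrite ffunE; case: ifP.
Qed.

(* A clique with a vertex outside [X1] and one outside [X2] has an edge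
   inside neither. *)
Lemma pcol_free_split X1 X2 g :
  (forall e, g e != None -> (e \subset X1) || (e \subset X2)) ->
  pcol_free g = pcol_free (pcol_restr X1 g) && pcol_free (pcol_restr X2 g).
Proof.
move=> g_split; apply/idP/andP => [g_free | [free1 free2]].
  by split; apply: pcol_free_restr.
apply/negP => /existsP [phi copy_phi].
have copy_restr X : (forall i j, i != j -> [set phi i; phi j] \subset X) ->
    pcol_copy (pcol_restr X g) phi.
  by move=> phiX; rewrite (eq_pcol_copy (g2 := g)) // => i j ij; rewrite ffunE phiX.
have := pairs_one_side (fun i j ij => g_split _ (pcol_copy_clique copy_phi ij)).
case=> /copy_restr copy_phi'; [move/negP: free1 | move/negP: free2];
  by apply; apply/existsP; exists phi.
Qed.

Section Glue.
Variables (E : {set {set 'I_n}}) (X1 X2 : {set 'I_n}).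
Hypothesis no_cross : E :&: powerset (X1 :|: X2) \subset powerset X1 :|: powerset X2.

Lemma pcol_on_split g : pcol_on (E :&: powerset (X1 :|: X2)) g ->
  forall e, g e != None -> (e \subset X1) || (e \subset X2).
Proof.
by move=> /pcol_onP on_g e; rewrite on_g => /(subsetP no_cross); rewrite in_setU ?powersetE.
Qed.

Lemma pcol_restr2_inj g g' :
  pcol_on (E :&: powerset (X1 :|: X2)) g -> pcol_on (E :&: powerset (X1 :|: X2)) g' ->
  pcol_restr X1 g = pcol_restr X1 g' -> pcol_restr X2 g = pcol_restr X2 g' -> g = g'.
Proof.
move=> on_g on_g' /ffunP eq1 /ffunP eq2; apply/ffunP => e.
move: (eq1 e) (eq2 e); rewrite !ffunE.
case: ifP => [_ // | eX1]; case: ifP => [_ // | eX2] _ _.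
have out h : pcol_on (E :&: powerset (X1 :|: X2)) h -> h e = None.
  by move=> /pcol_on_split/(_ e); rewrite eX1 eX2; case: (h e) => // x /(_ isT).
by rewrite !out.
Qed.

Section Gluing.
Variables g1 g2 : pcol.
Hypotheses (on1 : pcol_on (E :&: powerset X1) g1) (on2 : pcol_on (E :&: powerset X2) g2).
Hypothesis agree : pcol_restr (X1 :&: X2) g1 = pcol_restr (X1 :&: X2) g2.

Definition pcol_glue : pcol := [ffun e : {set 'I_n} => if e \subset X1 then g1 e else g2 e].

Lemma pcol_glue_restr1 : pcol_restr X1 pcol_glue = g1.
Proof.
apply/ffunP => e; rewrite !ffunE; case: ifP => [-> // | eX1].
by rewrite (pcol_on_notin on1) // !inE ?powersetE eX1 andbF.
Qed.

Lemma pcol_glue_restr2 : pcol_restr X2 pcol_glue = g2.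
Proof.
apply/ffunP => e; rewrite !ffunE; case: ifP => eX2; last first.
  by rewrite (pcol_on_notin on2) // !inE ?powersetE eX2 andbF.
case: ifP => eX1 //; move/ffunP/(_ e): agree.
by rewrite !ffunE subsetI eX1 eX2.
Qed.

Lemma pcol_glue_on : pcol_on (E :&: powerset (X1 :|: X2)) pcol_glue.
Proof.
move/pcol_onP: on1 => on1'; move/pcol_onP: on2 => on2'.
apply/pcol_onP => e; rewrite ffunE.
case: ifP => eX1; first by rewrite on1' !inE ?powersetE eX1 subsetU ?eX1.
rewrite on2' !inE ?powersetE; case eE: (e \in E) => //=.
apply/idP/idP => [eX2 | eX]; first by rewrite subsetU ?eX2 ?orbT.
by have := subsetP no_cross e; rewrite !inE ?powersetE eE eX eX1 => /(_ isT).
Qed.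

End Gluing.

Lemma nb_ext_glue psi :
  nb_ext E (X1 :|: X2) (X1 :&: X2) psi =
  nb_ext E X1 (X1 :&: X2) psi * nb_ext E X2 (X1 :&: X2) psi.
Proof.
have [YX1 YX2] : X1 :&: X2 \subset X1 /\ X1 :&: X2 \subset X2 by rewrite subsetIl subsetIr.
have [X1U X2U] : X1 \subset X1 :|: X2 /\ X2 \subset X1 :|: X2 by rewrite subsetUl subsetUr.
rewrite /nb_ext -cardsX -(card_in_imset (f := fun g => (pcol_restr X1 g, pcol_restr X2 g))).
  apply: eq_card => -[g1 g2]; rewrite !inE /=; apply/imsetP/andP.
    case=> g; rewrite inE => /and3P [on_g g_free /eqP <-] [-> ->].
    rewrite (pcol_free_split (pcol_on_split on_g)) in g_free; case/andP: g_free => -> ->.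
    by rewrite !(pcol_on_restr _ on_g) // !pcol_restrK ?eqxx.
  case=> /and3P [on1 free1 /eqP Y1] /and3P [on2 free2 /eqP Y2].
  have agree : pcol_restr (X1 :&: X2) g1 = pcol_restr (X1 :&: X2) g2 by rewrite Y1 Y2.
  have on_glue := pcol_glue_on on1 on2.
  exists (pcol_glue g1 g2); last by rewrite pcol_glue_restr1 // pcol_glue_restr2.
  rewrite inE on_glue (pcol_free_split (pcol_on_split on_glue)).
  rewrite pcol_glue_restr1 // pcol_glue_restr2 // free1 free2.
  by rewrite -(pcol_restrK _ YX1) pcol_glue_restr1 // Y1 eqxx.
move=> g g'; rewrite !inE => /and3P [on_g _ _] /and3P [on_g' _ _] [eq1 eq2].
exact: pcol_restr2_inj.
Qed.

End Glue.

Lemma nb_ext_glue_disjoint E A B H psi : simple_graph E -> [disjoint A & B] ->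
  (forall a b, a \in A -> b \in B -> [set a; b] \notin E) ->
  nb_ext E (A :|: B :|: H) H psi = nb_ext E (A :|: H) H psi * nb_ext E (B :|: H) H psi.
Proof.
move=> /forallP simpleE AB no_edge.
have U : (A :|: H) :|: (B :|: H) = A :|: B :|: H by rewrite setUACA setUid.
have I : (A :|: H) :&: (B :|: H) = H by rewrite -setUIl disjoint_setI0 ?set0U.
suff no_cross : E :&: powerset ((A :|: H) :|: (B :|: H)) \subset
                 powerset (A :|: H) :|: powerset (B :|: H).
  by have := nb_ext_glue no_cross psi; rewrite U I.
apply/subsetP => e; rewrite !inE ?powersetE U => /andP [eE eU]; apply/negPn/negP.
rewrite negb_or => /andP [/subsetPn [b be bAH] /subsetPn [a ae aBH]].
have aA : a \in A by move: (subsetP eU a ae) aBH; rewrite !inE; do !case: (_ \in _).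
have bB : b \in B by move: (subsetP eU b be) bAH; rewrite !inE; do !case: (_ \in _).
have ab : a != b by apply: contraTneq bB => <-; rewrite (disjointFr AB).
have e_ab : e = [set a; b].
  apply/eqP; rewrite eq_sym eqEcard subUset !sub1set ae be cards2 ab.
  by move: (simpleE e); rewrite eE => /eqP ->.
by move: (no_edge a b aA bB); rewrite -e_ab eE.
Qed.


Definition relabel_graph s E : {set {set 'I_n}} := [set e : {set 'I_n} | s^-1%g @: e \in E].

Definition relabel s g : pcol := [ffun e : {set 'I_n} => g (s^-1%g @: e)].

Lemma relabelK s : cancel (relabel s) (relabel s^-1%g).
Proof. by move=> g; apply/ffunP => e; rewrite !ffunE imset_permKV. Qed.

Lemma relabelKV s : cancel (relabel s^-1%g) (relabel s).
Proof. by move=> g; apply/ffunP => e; rewrite !ffunE imset_permK. Qed.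

Lemma relabel_graph_powerset s E X :
  relabel_graph s E :&: powerset (s @: X) = relabel_graph s (E :&: powerset X).
Proof. by apply/setP => e; rewrite !inE ?powersetE subset_imset_perm. Qed.

Lemma pcol_on_relabel s E g : pcol_on (relabel_graph s E) (relabel s g) = pcol_on E g.
Proof.
apply/pcol_onP/pcol_onP => on_g e; last by rewrite ffunE inE on_g.
by have := on_g (s @: e); rewrite ffunE inE imset_permK.
Qed.

Lemma pcol_restr_relabel s Y g :
  pcol_restr (s @: Y) (relabel s g) = relabel s (pcol_restr Y g).
Proof. by apply/ffunP => e; rewrite !ffunE subset_imset_perm. Qed.

Lemma pcol_copy_relabel s g phi :
  pcol_copy (relabel s g) phi = pcol_copy g [ffun i => s^-1%g (phi i)].
Proof.
have pairE i j : s^-1%g @: [set phi i; phi j] = [set s^-1%g (phi i); s^-1%g (phi j)].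
  by rewrite imsetU1 imset_set1.
rewrite /pcol_copy; congr [&& _, _ & _].
- apply/injectiveP/injectiveP => phi_inj i j; rewrite ?ffunE.
    by move/perm_inj; apply: phi_inj.
  by move=> eq_ij; apply: phi_inj; rewrite !ffunE eq_ij.
- by do 2![apply: eq_forallb => ?]; rewrite !ffunE pairE.
- by do 4![apply: eq_forallb => ?]; rewrite !ffunE !pairE.
Qed.

Lemma pcol_free_relabel s g : pcol_free (relabel s g) = pcol_free g.
Proof.
congr (~~ _); apply/existsP/existsP => -[phi copy_phi].
  by exists [ffun i => s^-1%g (phi i)]; rewrite -pcol_copy_relabel.
exists [ffun i => s (phi i)]; rewrite pcol_copy_relabel.
by congr (pcol_copy g _): copy_phi; apply/ffunP => i; rewrite !ffunE permK.
Qed.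

Lemma nb_ext_relabel s E X Y psi :
  nb_ext (relabel_graph s E) (s @: X) (s @: Y) (relabel s psi) = nb_ext E X Y psi.
Proof.
rewrite /nb_ext -[RHS](card_imset _ (can_inj (relabelK s))); apply: eq_card => h.
have relabel_in g :
    (relabel s g \in [set g | [&& pcol_on (relabel_graph s E :&: powerset (s @: X)) g,
                                 pcol_free g & pcol_restr (s @: Y) g == relabel s psi]]) =
    (g \in [set g | [&& pcol_on (E :&: powerset X) g, pcol_free g & pcol_restr Y g == psi]]).
  rewrite !inE relabel_graph_powerset pcol_on_relabel pcol_free_relabel.
  by rewrite pcol_restr_relabel (can_eq (relabelK s)).
apply/idP/imsetP => [h_in | [g g_in ->]]; last by rewrite relabel_in.
by exists (relabel s^-1%g h); rewrite ?relabelKV // -relabel_in relabelKV.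
Qed.

(* The transposition of [x] and [y] maps [E] on [x |: B] onto [clone E x y] on
   [y |: B] and fixes every coloring of [B]. *)
Lemma nb_ext_clone E x y B psi : x != y -> x \notin B -> y \notin B ->
  nb_ext (clone E x y) (y |: B) B psi = nb_ext E (x |: B) B psi.
Proof.
move=> xy xB yB; set s := tperm x y.
have [psiB | psi_out] := eqVneq (pcol_restr B psi) psi; last by rewrite !nb_ext_out.
have sB : s @: B = B by apply: imset_tperm_id.
have s_psi : relabel s psi = psi.
  have out e : ~~ (e \subset B) -> psi e = None by rewrite -psiB ffunE => /negbTE ->.
  apply/ffunP => e; rewrite ffunE tpermV; have [eB | eB] := boolP (e \subset B).
    by rewrite imset_tperm_id //; [apply: contra xB | apply: contra yB]; apply: (subsetP eB).
  by rewrite !out // -tpermV subset_imset_perm sB.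
have clone_eq : clone E x y :&: powerset (y |: B) = relabel_graph s E :&: powerset (y |: B).
  apply/setP => e; rewrite !inE ?powersetE tpermV.
  case: (boolP (e \subset y |: B)) => [eyB | _]; rewrite ?andbF // !andbT.
  have xe : x \notin e by apply: contra xB => /(subsetP eyB); rewrite !inE (negbTE xy).
  by case: ifP => ye; rewrite ?xe // imset_tperm_id ?ye.
rewrite (eq_nb_ext _ _ clone_eq) -[RHS](nb_ext_relabel s) s_psi sB.
by rewrite imsetU1 tpermL sB.
Qed.

Lemma cnt_free_nonedge G x y : 0 < r -> simple_graph G -> x != y -> [set x; y] \notin G ->
  cnt_free F G = \sum_psi nb_ext G (x |: ~: [set x; y]) (~: [set x; y]) psi *
                            nb_ext G (y |: ~: [set x; y]) (~: [set x; y]) psi.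
Proof.
move=> r_gt0 simpleG xy xyG; rewrite (cnt_free_nb_ext _ (~: [set x; y])) //.
apply: eq_bigr => psi _; rewrite -(setUCr [set x; y]) nb_ext_glue_disjoint //.
  by rewrite disjoints1 inE.
by move=> a b; rewrite !inE => /eqP -> /eqP ->.
Qed.

(* Cloning [x] into [y] or [y] into [x] gives [sum a^2] and [sum b^2]
   colorings against [sum a b] for [E], so extremality forces [a = b]. *)
Lemma nb_ext_twins E x y Y psi : 0 < r -> extremal F E -> x != y ->
  [set x; y] \notin E -> Y \subset ~: [set x; y] ->
  nb_ext E (x |: ~: [set x; y]) Y psi = nb_ext E (y |: ~: [set x; y]) Y psi.
Proof.
move=> r_gt0 [simpleE maxE] xy xyE YB; set B := ~: [set x; y].
have [xB yB] : x \notin B /\ y \notin B by rewrite !inE !eqxx orbT.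
have [xyB yxB] : y \notin x |: B /\ x \notin y |: B.
  by rewrite !inE !eqxx !orbT /= !orbF eq_sym xy.
pose a chi := nb_ext E (x |: B) B chi; pose b chi := nb_ext E (y |: B) B chi.
have cntE : cnt_free F E = \sum_chi a chi * b chi by apply: cnt_free_nonedge.
have a_eq_b : a =1 b.
  apply: eq_of_sum_sqr_le; rewrite -cntE.
    have simple_xy := clone_simple x y simpleE.
    apply: leq_trans (maxE _ simple_xy).
    rewrite (cnt_free_nonedge r_gt0 simple_xy xy (clone_nonedge E x y)).
    apply: eq_leq; apply: eq_bigr => chi _; rewrite -mulnn nb_ext_clone //.
    by rewrite (eq_nb_ext _ _ (clone_powerset _ _ xyB)).
  have simple_yx := clone_simple y x simpleE.
  apply: leq_trans (maxE _ simple_yx).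
  rewrite (cnt_free_nonedge r_gt0 simple_yx xy); last by rewrite setUC clone_nonedge.
  apply: eq_leq; apply: eq_bigr => chi _; rewrite -mulnn mulnC nb_ext_clone 1?eq_sym //.
  by rewrite (eq_nb_ext _ _ (clone_powerset _ _ yxB)).
rewrite (nb_ext_restr _ _ _ YB) [RHS](nb_ext_restr _ _ _ YB).
by apply: eq_bigr => chi _; rewrite [nb_ext _ _ _ _]a_eq_b.
Qed.

Lemma cnt_free_star G x y z : 0 < r -> simple_graph G -> x != y -> x != z ->
  [set x; y] \notin G -> [set x; z] \notin G ->
  cnt_free F G = \sum_chi nb_ext G (x |: ~: [set x; y; z]) (~: [set x; y; z]) chi *
                            nb_ext G ([set y; z] :|: ~: [set x; y; z]) (~: [set x; y; z]) chi.
Proof.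
move=> r_gt0 simpleG xy xz xyG xzG; rewrite (cnt_free_nb_ext _ (~: [set x; y; z])) //.
have xyz : [set x; y; z] = [set x] :|: [set y; z] by rewrite setUA.
apply: eq_bigr => chi _; rewrite -(setUCr [set x; y; z]) {1}xyz nb_ext_glue_disjoint //.
  by rewrite disjoints1 !inE negb_or xy xz.
by move=> a b; rewrite !inE => /eqP -> /orP [] /eqP ->.
Qed.

Lemma nb_ext_star_twin E x y z chi : 0 < r -> extremal F E ->
  x != y -> x != z -> y != z -> [set x; y] \notin E -> [set x; z] \notin E ->
  nb_ext E ([set y; z] :|: ~: [set x; y; z]) (~: [set x; y; z]) chi =
  nb_ext E (x |: ~: [set x; y; z]) (~: [set x; y; z]) chi *
  nb_ext E (z |: ~: [set x; y; z]) (~: [set x; y; z]) chi.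
Proof.
move=> r_gt0 maxE xy xz yz xy_notE xz_notE.
have B_eq : ~: [set x; y] = z |: ~: [set x; y; z] by rewrite (setC2_split (z := z)) // eq_sym.
have := nb_ext_twins chi r_gt0 maxE xy xy_notE; rewrite B_eq => /(_ _ (subsetUr _ _)).
rewrite !setUA => <-; rewrite nb_ext_glue_disjoint ?disjoints1 ?inE //.
  exact: (proj1 maxE).
by move=> a b; rewrite !in_set1 => /eqP -> /eqP ->.
Qed.

Section Symmetrization.
Variables (E : {set {set 'I_n}}) (u v w : 'I_n).
Hypotheses (r_gt0 : 0 < r) (maxE : extremal F E).
Hypotheses (uv : u != v) (uw : u != w) (vw : v != w).
Hypotheses (uv_notE : [set u; v] \notin E) (uw_notE : [set u; w] \notin E).

Local Notation H := (~: [set u; v; w]).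
Local Notation ext G x := (nb_ext G (x |: H) H).

Lemma notin_star : [/\ u \notin H, v \notin H & w \notin H].
Proof. by rewrite !inE !eqxx !orbT. Qed.

Lemma cnt_free_delete_edge :
  cnt_free F (E :\ [set v; w]) = \sum_chi ext E u chi * (ext E v chi * ext E w chi).
Proof.
have [simpleE _] := maxE; set E' := E :\ [set v; w].
have simpleE' : simple_graph E' := simple_graph_subset simpleE (subsetDl _ _).
have [uH vH wH] := notin_star.
have vw_notE' : [set v; w] \notin E' by rewrite !inE eqxx.
have notE' e : e \notin E -> e \notin E' by rewrite !inE negb_and => ->; rewrite orbT.
rewrite (cnt_free_star r_gt0 simpleE' uv uw (notE' _ uv_notE) (notE' _ uw_notE)).
apply: eq_bigr => chi _; rewrite nb_ext_glue_disjoint ?disjoints1 ?inE //; last first.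
  by move=> a b; rewrite !in_set1 => /eqP -> /eqP ->.
have not_vw X : (v \notin X) || (w \notin X) -> ~~ ([set v; w] \subset X).
  by rewrite subUset !sub1set negb_and.
rewrite /E' !(eq_nb_ext _ _ (setD1_powerset _ (not_vw _ _))) // !in_setU1 !negb_or.
- by rewrite vw vH.
- by rewrite eq_sym vw wH orbT.
- by rewrite eq_sym uv vH.
Qed.

Lemma cnt_free_double_clone :
  cnt_free F (clone (clone E u v) u w) = \sum_chi ext E u chi * (ext E u chi * ext E u chi).
Proof.
have [simpleE _] := maxE; set E1 := clone E u v; set K := clone E1 u w.
have simpleK : simple_graph K by do 2!apply: clone_simple.
have [uH vH wH] := notin_star.
have [vuH wuH wvH] : [/\ v \notin u |: H, w \notin u |: H & w \notin v |: H].
  by rewrite !in_setU1 !negb_or vH wH (eq_sym v) (eq_sym w) uv uw (eq_sym w) vw.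
have uv_notK : [set u; v] \notin K.
  have wuv : w \notin [set u; v] by rewrite !inE !negb_or !(eq_sym w) uw vw.
  by rewrite mem_clone_notin // clone_nonedge.
rewrite (cnt_free_star r_gt0 simpleK uv uw uv_notK (clone_nonedge _ _ _)).
apply: eq_bigr => chi _; rewrite nb_ext_glue_disjoint ?disjoints1 ?inE //; last first.
  move=> a b; rewrite !in_set1 => /eqP -> /eqP ->.
  have vu : v != u by rewrite eq_sym.
  by rewrite mem_clone_pair //; rewrite setUC clone_nonedge.
rewrite /K /E1 (eq_nb_ext _ _ (clone_powerset _ _ wuH)) (eq_nb_ext _ _ (clone_powerset _ _ vuH)).
rewrite (eq_nb_ext _ _ (clone_powerset _ _ wvH)) nb_ext_clone //.
by rewrite nb_ext_clone // (eq_nb_ext _ _ (clone_powerset _ _ vuH)).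
Qed.

Lemma cnt_free_symmetrization :
  2 * cnt_free F E <= cnt_free F (E :\ [set v; w]) + cnt_free F (clone (clone E u v) u w).
Proof.
have [simpleE _] := maxE; have wv : w != v by rewrite eq_sym.
rewrite cnt_free_delete_edge cnt_free_double_clone.
rewrite (cnt_free_star r_gt0 simpleE uv uw uv_notE uw_notE) -big_split big_distrr /=.
apply: leq_sum => chi _; apply: twin_AM_GM.
  have := nb_ext_star_twin chi r_gt0 maxE uw uv wv uw_notE uv_notE.
  by rewrite (setUC [set w] [set v]) (setUAC [set u] [set w] [set v]).
exact: nb_ext_star_twin.
Qed.

End Symmetrization.

End PartialColorings.

Theorem lemma2p10 (r k n : nat) (F : pattern k r) (E : {set {set 'I_n}})
  (u v w : 'I_n) :
  2 <= r -> 3 <= k ->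
  extremal F E -> ~ complete_multipartite E ->
  [set u; v] \notin E -> [set u; w] \notin E -> [set v; w] \in E ->
  extremal F (E :\ [set v; w]).
Proof.
move=> r_ge2 _ maxE _ uv_notE uw_notE vw_E; have [simpleE maxE'] := maxE.
have vw : v != w by have := forallP simpleE [set v; w]; rewrite vw_E cards2; case: (v != w).
have uv : u != v by apply: contraNneq uw_notE => ->.
have uw : u != w by apply: contraNneq uv_notE => ->; rewrite setUC.
split; first exact: simple_graph_subset simpleE (subsetDl _ _).
move=> G simpleG; apply: leq_trans (maxE' G simpleG) _.
have clone_le := maxE' _ (clone_simple u w (clone_simple u v simpleE)).
have := cnt_free_symmetrization (ltnW r_ge2) maxE uv uw vw uv_notE uw_notE.
move/leq_trans/(_ (leq_add (leqnn _) clone_le)).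
by rewrite mul2n -addnn leq_add2r.
Qed.
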